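(* Let $G=(V,E)$ be a finite simple graph and let $L$ and $|H|$ be its connection matrix and its sign-less Hodge Laplacian (defined in the context). Then $L$ is invertible, its inverse $L^{-1}$ has integer entries, and $$|H| = L - L^{-1}.$$
   Context: Let $G=(V,E)$ be a finite simple graph. Its associated $1$-dimensional simplicial complex is the set of simplices $X=\{\{v\}: v\in V\}\cup E$, where each edge is regarded as a $2$-element subset of $V$; put $N=|V|+|E|$. Fix an ordering of $X$, so that real-valued functions on $X$ are vectors in $\mathbb{R}^N$ and operators on them are $N\times N$ matrices indexed by $X$. The connection matrix (connection Laplacian) $L$ is the $N\times N$ matrix with $L(x,y)=1$ if $x\cap y\neq\emptyset$ and $L(x,y)=0$ if $x\cap y=\emptyset$. The sign-less exterior derivative $|d|$ is the $N\times N$ matrix with $|d|(x,y)=1$ if $y\subset x$ and $|x|=|y|+1$, and $|d|(x,y)=0$ otherwise. The sign-less Hodge Laplacian is $|H|=(|d|+|d|^T)^2$. *)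

From HB Require Import structures.
From mathcomp Require Import all_boot all_order all_algebra.
Set Implicit Arguments. Unset Strict Implicit. Unset Printing Implicit Defensive.
Import Order.TTheory GRing.Theory Num.Theory.
Local Open Scope ring_scope.

(* A finite simple graph: vertex type T : finType, adjacency e : rel T
   (assumed symmetric and irreflexive in the theorem). *)
Definition is_simplex (T : finType) (e : rel T) (A : {set T}) : bool :=
  (#|A| == 1)%N || [exists x, exists y, e x y && (A == [set x; y])].

Definition simplex (T : finType) (e : rel T) := {A : {set T} | is_simplex e A}.

Definition nsimp (T : finType) (e : rel T) : nat := #|{: simplex e}|.

Definition sx (T : finType) (e : rel T) (i : 'I_(nsimp e)) : {set T} :=
  val (enum_val i : simplex e).

Definition conn_mx (T : finType) (e : rel T) : 'M[rat]_(nsimp e) :=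
  \matrix_(i, j) ((sx i :&: sx j != set0) : nat)%:R.

Definition dabs (T : finType) (e : rel T) : 'M[rat]_(nsimp e) :=
  \matrix_(i, j) (((sx j \subset sx i) && (#|sx i| == #|sx j|.+1)%N) : nat)%:R.

Definition hodge_abs (T : finType) (e : rel T) : 'M[rat]_(nsimp e) :=
  (dabs e + (dabs e)^T) *m (dabs e + (dabs e)^T).

From HB Require Import structures.
From mathcomp Require Import all_boot all_order all_algebra.
Set Implicit Arguments. Unset Strict Implicit. Unset Printing Implicit Defensive.
Import Order.TTheory GRing.Theory Num.Theory.
Local Open Scope ring_scope.

(* Let W be the simplex-vertex incidence matrix, W(x, v) = [v \in x].  Then
   (W W^T)(x, y) = |x \cap y|, which is 0 or 1 except on the diagonal at edges,
   where it is 2; hence L = W W^T - P with P the diagonal projection onto the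
   edges.  Split W = J + B into its vertex rows J and edge rows B: then
   |d| = B J^T, P = 1 - J J^T, and the two identities J^T J = 1, J^T B = 0 alone
   force L (L - |H|) = 1 by a computation in the matrix algebra.  Integrality of
   L^-1 = L - |H| is then immediate. *)

Section IncidenceAlgebra.
Variables (R : comPzRingType) (N n : nat) (J B : 'M[R]_(N, n)).
Hypotheses (tr_mulJJ : J^T *m J = 1%:M) (tr_mulJB : J^T *m B = 0).

Local Notation W := (J + B).
Local Notation D := (B *m J^T).

Lemma incidence_conn_mul_inv :
  (W *m W^T - (1%:M - J *m J^T)) *m
    ((W *m W^T - (1%:M - J *m J^T)) - (D + D^T) *m (D + D^T)) = 1%:M.
Proof.
set P := 1%:M - J *m J^T.
have tr_mulBJ : B^T *m J = 0 by rewrite -[J]trmxK -trmx_mul tr_mulJB trmx0.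
have mulJJ p (X : 'M_(n, p)) : J^T *m (J *m X) = X.
  by rewrite mulmxA tr_mulJJ mul1mx.
have mulJB p (X : 'M_(n, p)) : J^T *m (B *m X) = 0.
  by rewrite mulmxA tr_mulJB mul0mx.
have mulBJ p (X : 'M_(n, p)) : B^T *m (J *m X) = 0.
  by rewrite mulmxA tr_mulBJ mul0mx.
have mulPJ p (X : 'M_(n, p)) : P *m (J *m X) = 0.
  by rewrite mulmxBl mul1mx -mulmxA mulJJ subrr.
have mulPB p (X : 'M_(n, p)) : P *m (B *m X) = B *m X.
  by rewrite mulmxBl mul1mx -mulmxA mulJB mulmx0 subr0.
have tr_mulJP : J^T *m P = 0 by rewrite mulmxBr mulmx1 mulJJ subrr.
have tr_mulBP : B^T *m P = B^T by rewrite mulmxBr mulmx1 mulBJ subr0.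
have mulPP : P *m P = P by rewrite mulmxBr mulmx1 mulPJ subr0.
have mulJJ_addP : J *m J^T + P = 1%:M by rewrite /P addrC subrK.
clearbody P.
have hodgeE : (D + D^T) *m (D + D^T) = B *m B^T + J *m (B^T *m D).
  rewrite trmx_mul trmxK mulmxDl !mulmxDr -!mulmxA mulJB mulJJ mulBJ !mulmx0.
  by rewrite addr0 add0r.
set K := (W *m W^T - P) - _.
have KE : K = J *m J^T + J *m B^T + D - P - J *m (B^T *m D).
  rewrite /K hodgeE [W^T]raddfD /= mulmxDl !mulmxDr opprD !addrA.
  by rewrite (addrAC _ (- P)) addrK.
have trWK : W^T *m K = J^T.
  rewrite KE [W^T]raddfD /= mulmxDl !mulmxBr !mulmxDr.
  rewrite !mulJJ mulJB !mulBJ tr_mulJP tr_mulBP.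
  by rewrite !subr0 !addr0 !add0r addrA subrK addrK.
have PK : P *m K = D - P.
  by rewrite KE !mulmxBr !mulmxDr !mulPJ mulPB mulPP !add0r subr0.
rewrite mulmxBl -mulmxA trWK PK mulmxDl opprB addrA.
by rewrite (addrAC _ D) addrK mulJJ_addP.
Qed.

End IncidenceAlgebra.

Section Simplices.
Variables (T : finType) (e : rel T).
Hypothesis e_irr : irreflexive e.
Implicit Types (i j : 'I_(nsimp e)) (v : T).

Lemma sx_inj : injective (@sx T e).
Proof. by move=> i j /val_inj /enum_val_inj. Qed.

Lemma card_sx12 i : (#|sx i| == 1)%N || (#|sx i| == 2)%N.
Proof.
rewrite /sx; case: (enum_val i) => A /= /orP[-> // | /existsP[x /existsP[y]]].
case/andP=> exy /eqP->; rewrite cards2; case: (x =P y) => [xy | //].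
by rewrite xy e_irr in exy.
Qed.

Lemma card_sx_le2 i : (#|sx i| <= 2)%N.
Proof. by case/orP: (card_sx12 i) => /eqP->. Qed.

Lemma card_setI_sx_le1 i j : i != j -> (#|sx i :&: sx j| <= 1)%N.
Proof.
move=> neq_ij; rewrite leqNgt; apply: contra neq_ij => card_ij.
have setI_eq (k : 'I_(nsimp e)) :
    sx i :&: sx j \subset sx k -> sx i :&: sx j = sx k.
  move=> sub_k; apply/eqP; rewrite eqEcard sub_k /=.
  exact: leq_trans (card_sx_le2 k) card_ij.
apply/eqP/sx_inj; rewrite -(setI_eq i (subsetIl _ _)) (setI_eq j) //.
exact: subsetIr.
Qed.

Lemma is_simplex_set1 v : is_simplex e [set v].
Proof. by rewrite /is_simplex cards1. Qed.

Definition vsimplex (v : T) : 'I_(nsimp e) :=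
  enum_rank (Sub [set v] (is_simplex_set1 v) : simplex e).

Lemma sx_vsimplex v : sx (vsimplex v) = [set v].
Proof. by rewrite /sx /vsimplex enum_rankK SubK. Qed.

Section Incidence.
Variable R : pzSemiRingType.

Lemma sum_sx_set1 v (F : 'I_(nsimp e) -> R) :
  \sum_i ((sx i == [set v]) : nat)%:R * F i = F (vsimplex v).
Proof.
rewrite (bigD1 (vsimplex v)) //= sx_vsimplex eqxx mul1r.
rewrite big1 ?addr0 // => i ne_i.
case: eqP => [sx_i | _]; last by rewrite mul0r.
by rewrite -sx_vsimplex in sx_i; rewrite (sx_inj sx_i) eqxx in ne_i.
Qed.

Lemma sum_set1_enum_val (a : T) (F : 'I_#|T| -> R) :
  \sum_k (([set a] == [set enum_val k]) : nat)%:R * F k = F (enum_rank a).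
Proof.
rewrite (bigD1 (enum_rank a)) //= enum_rankK eqxx mul1r.
rewrite big1 ?addr0 // => k ne_k.
case: eqP => [/set1_inj a_k | _]; last by rewrite mul0r.
by rewrite a_k enum_valK eqxx in ne_k.
Qed.

Lemma sum_set1_enum_val_eq0 (S : {set T}) (F : 'I_#|T| -> R) : #|S| != 1%N ->
  \sum_k ((S == [set enum_val k]) : nat)%:R * F k = 0.
Proof.
move=> card_S; rewrite big1 // => k _.
case: eqP => [S_k | _]; last by rewrite mul0r.
by rewrite S_k cards1 in card_S.
Qed.

Lemma sum_mem_setI (A B : {set T}) :
  \sum_(k < #|T|) ((enum_val k \in A) : nat)%:R * ((enum_val k \in B) : nat)%:R
    = #|A :&: B|%:R :> R.
Proof.
under eq_bigr do rewrite -natrM.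
rewrite -natr_sum -(big_enum_val (fun x => ((x \in A) : nat) * (x \in B)))%N /=.
rewrite -sum1_card; congr _%:R; rewrite [RHS]big_mkcond; apply: eq_bigr => x _.
by rewrite inE; case: (x \in A); case: (x \in B).
Qed.

Definition vertex_incidence_mx : 'M[R]_(nsimp e, #|T|) :=
  \matrix_(i, k) ((sx i == [set enum_val k]) : nat)%:R.

Definition edge_incidence_mx : 'M[R]_(nsimp e, #|T|) :=
  \matrix_(i, k) (((#|sx i| == 2)%N && (enum_val k \in sx i)) : nat)%:R.

Local Notation J := vertex_incidence_mx.
Local Notation B := edge_incidence_mx.

Lemma tr_vertex_incidence_mxK : J^T *m J = 1%:M.
Proof.
apply/matrixP => k l; rewrite !mxE; under eq_bigr do rewrite !mxE.
by rewrite sum_sx_set1 sx_vsimplex (inj_eq set1_inj) (inj_eq enum_val_inj).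
Qed.

Lemma tr_vertex_mul_edge_incidence_mx : J^T *m B = 0.
Proof.
apply/matrixP => k l; rewrite !mxE big1 // => i _; rewrite !mxE.
by case: eqP => [-> | _]; rewrite ?cards1 ?mulr0 ?mul0r.
Qed.

Lemma vertex_incidence_mul_tr :
  J *m J^T = \matrix_(i, j) (((i == j) && (#|sx i| == 1)%N) : nat)%:R.
Proof.
apply/matrixP => i j; rewrite !mxE; under eq_bigr do rewrite !mxE.
case/orP: (card_sx12 i) => [/cards1P[a sx_i] | /eqP card_i].
  rewrite sx_i sum_set1_enum_val enum_rankK cards1 andbT -sx_i.
  by rewrite (inj_eq sx_inj) eq_sym.
by rewrite sum_set1_enum_val_eq0 card_i ?andbF.
Qed.

Lemma incidence_mxE : J + B = \matrix_(i, k) ((enum_val k \in sx i) : nat)%:R.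
Proof.
apply/matrixP => i k; rewrite !mxE.
case/orP: (card_sx12 i) => [/cards1P[a ->] | /eqP card_i].
  by rewrite cards1 addr0 (inj_eq set1_inj) in_set1 eq_sym.
rewrite card_i /=; case: eqP => [sx_i | _]; last by rewrite add0r.
by rewrite sx_i cards1 in card_i.
Qed.

Lemma incidence_mul_tr :
  (J + B) *m (J + B)^T = \matrix_(i, j) #|sx i :&: sx j|%:R.
Proof.
apply/matrixP => i j; rewrite incidence_mxE !mxE.
by under eq_bigr do rewrite !mxE; rewrite sum_mem_setI.
Qed.

End Incidence.

Local Notation J := (vertex_incidence_mx rat).
Local Notation B := (edge_incidence_mx rat).

Lemma conn_mx_incidence : conn_mx e = (J + B) *m (J + B)^T - (1%:M - J *m J^T).
Proof.
apply/matrixP => i j; rewrite incidence_mul_tr vertex_incidence_mul_tr !mxE.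
case: (i =P j) => [<- | /eqP neq_ij]; last first.
  rewrite subr0 -card_gt0.
  by case: #|_| (card_setI_sx_le1 neq_ij) => [|[|]].
rewrite setIid -card_gt0 /= opprB addrCA.
case/orP: (card_sx12 i) => /eqP ->; first by rewrite subrr addr0.
by rewrite (natrD _ 1 1) addrK.
Qed.

Lemma dabs_incidence : dabs e = B *m J^T.
Proof.
apply/matrixP => i j; rewrite !mxE; under eq_bigr do rewrite !mxE mulrC.
case/orP: (card_sx12 j) => [/cards1P[a ->] | /eqP card_j].
  by rewrite sum_set1_enum_val enum_rankK cards1 sub1set andbC.
rewrite sum_set1_enum_val_eq0 card_j //.
by rewrite (ltn_eqF (leq_ltn_trans (card_sx_le2 i) (ltnSn _))) andbF.
Qed.

End Simplices.

Lemma mxOver_int_map (R : archiNumDomainType) m n (A : 'M[R]_(m, n)) :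
  A \is a mxOver Num.int ->
  exists M : 'M[int]_(m, n), A = map_mx (fun z : int => z%:~R) M.
Proof.
move=> /mxOverP A_int; exists (map_mx Num.floor A).
by apply/matrixP => i j; rewrite !mxE floorK.
Qed.

Section ConnectionMatrix.
Variables (T : finType) (e : rel T).
Hypothesis e_irr : irreflexive e.

Lemma conn_mx_mul_inv : conn_mx e *m (conn_mx e - hodge_abs e) = 1%:M.
Proof.
rewrite /hodge_abs dabs_incidence // conn_mx_incidence //.
apply: incidence_conn_mul_inv; first exact: tr_vertex_incidence_mxK.
exact: tr_vertex_mul_edge_incidence_mx.
Qed.

Lemma conn_mx_sub_hodge_int : conn_mx e - hodge_abs e \is a mxOver Num.int.
Proof.
have dabs_int : dabs e + (dabs e)^T \is a mxOver Num.int.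
  by apply/mxOverP => i j; rewrite !mxE rpredD ?natr_int.
have /mxOverP hodge_int : hodge_abs e \is a mxOver Num.int by exact: mxOverM.
apply/mxOverP => i j; rewrite mxE [X in _ + X]mxE rpredB ?hodge_int //.
by rewrite mxE natr_int.
Qed.

End ConnectionMatrix.

Theorem mainTheorem1 (T : finType) (e : rel T)
  (e_sym : symmetric e) (e_irr : irreflexive e) :
  conn_mx e \in unitmx /\
  (exists M : 'M[int]_(nsimp e), invmx (conn_mx e) = map_mx (fun z : int => z%:~R) M) /\
  hodge_abs e = conn_mx e - invmx (conn_mx e).
Proof.
have mul_inv := conn_mx_mul_inv e_irr.
have [unit_L _] := mulmx1_unit mul_inv.
have invE : invmx (conn_mx e) = conn_mx e - hodge_abs e.
  by rewrite -[RHS](mulKmx unit_L) mul_inv mulmx1.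
split=> //; split; last by rewrite invE opprB addrC subrK.
by apply: mxOver_int_map; rewrite invE conn_mx_sub_hodge_int.
Qed.
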